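(* Let $\xi_1,\xi_2,\dots$ be i.i.d. integer-valued random variables with $\mathbb E\xi_1<0$, and suppose $\mathbb E e^{\beta\xi_1}=1$ for some $\beta>0$. Let $\xi^{(\beta)}_1,\xi^{(\beta)}_2,\dots$ be i.i.d. with $\mathbb P\{\xi^{(\beta)}_k=j\}=e^{\beta j}\mathbb P\{\xi_1=j\}$, $j\in\mathbb Z$, and $S^{(\beta)}_0=0$, $S^{(\beta)}_n=\sum_{k=1}^n\xi^{(\beta)}_k$. Define $$f(i):=e^{\beta i}\,\mathbb P\Big\{\min_{n\ge0}S^{(\beta)}_n\ge -i\Big\},\qquad i\in\mathbb Z_+.$$ Then $f$ is harmonic for the random walk killed at leaving $\mathbb Z_+$, i.e. $f(i)=\sum_{j=0}^\infty\mathbb P\{\xi_1=j-i\}f(j)$ for all $i\ge0$; moreover $e^{\beta i}-e^{-\beta}\le f(i)\le e^{\beta i}$ for all $i\ge0$; and $f(i)=\mathbb P\{\tau^{(\beta)}_1=\infty\}\sum_{j=0}^ie^{\beta(i-j)}u(j)$, where $u(j)$ is the renewal mass function of the strict descending ladder heights of $S_n=\sum_{k=1}^n\xi_k$ (i.e. $u(l)=\sum_{k\ge0}\mathbb P\{\chi_1+\dots+\chi_k=l,\ \tau_1<\infty,\dots,\tau_k<\infty\}$ with $(\tau_k,\chi_k)$ the strict descending ladder epochs and heights, heights taken positive) and $\tau^{(\beta)}_1$ is the first strict descending ladder epoch of $S^{(\beta)}_n$. *)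

From Stdlib Require Import Reals ZArith ClassicalEpsilon.
Open Scope R_scope.

(* Limit of a real sequence (0 if it does not converge). *)
Definition lim_seq (u : nat -> R) : R :=
  match excluded_middle_informative (exists l, Un_cv u l) with
  | left H => proj1_sig (constructive_indefinite_description _ H)
  | right _ => 0
  end.

(* Value of the series sum_{n>=0} u n (0 if divergent). *)
Definition sumN (u : nat -> R) : R := lim_seq (fun n => sum_f_R0 u n).

Definition sumZ (g : Z -> R) : R :=
  sumN (fun n => g (Z.of_nat n)) + sumN (fun n => g (- Z.of_nat (S n))%Z).

Definition has_sumZ (g : Z -> R) (l : R) : Prop :=
  exists a b, infinite_sum (fun n => g (Z.of_nat n)) a /\
              infinite_sum (fun n => g (- Z.of_nat (S n))%Z) b /\ l = a + b.

(* p is the law of xi_1: p j = P{xi_1 = j}. *)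
Definition is_pmf (p : Z -> R) : Prop := (forall j, 0 <= p j) /\ has_sumZ p 1.

(* E xi_1 < 0 in the extended sense: E xi^+ is finite and E xi^+ < E xi^-
   (E xi^- possibly infinite). *)
Definition mean_negative (p : Z -> R) : Prop :=
  exists A, infinite_sum (fun n => INR n * p (Z.of_nat n)) A /\
    forall B, infinite_sum (fun n => INR (S n) * p (- Z.of_nat (S n))%Z) B -> A < B.

Definition tilt (beta : R) (p : Z -> R) (j : Z) : R := exp (beta * IZR j) * p j.

(* stay q N x = P{ x + S_n >= 0 for all 0 <= n <= N }, S the walk with step law q. *)
Fixpoint stay (q : Z -> R) (N : nat) (x : Z) : R :=
  if (0 <=? x)%Z then
    match N with
    | O => 1
    | S N' => sumZ (fun j => q j * stay q N' (x + j)%Z)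
    end
  else 0.

(* P{ min_{n>=0} S_n >= -x } = lim_N P{ min_{0<=n<=N} S_n >= -x }. *)
Definition min_prob (q : Z -> R) (x : Z) : R := lim_seq (fun N => stay q N x).

Definition fbeta (beta : R) (p : Z -> R) (i : nat) : R :=
  exp (beta * INR i) * min_prob (tilt beta p) (Z.of_nat i).

(* P{tau_1 = infinity} for the walk with step law q, tau_1 = min{n>=1 : S_n < 0}:
   = P{S_n >= 0 for all n >= 0}. *)
Definition tau_inf_prob (q : Z -> R) : R := min_prob q 0%Z.

(* first_passage q n x l = P{ x + S_k >= 0 for 0 <= k < n, x + S_n = -l }. *)
Fixpoint first_passage (q : Z -> R) (n : nat) (x l : Z) : R :=
  match n with
  | O => if Z.eqb x (- l) then 1 else 0
  | S n' => if (0 <=? x)%Z then sumZ (fun j => q j * first_passage q n' (x + j)%Z l)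
            else 0
  end.

(* P{ tau_1 < infinity, chi_1 = l } (chi_1 = -S_{tau_1} > 0; mass 0 at l = 0). *)
Definition ladder_height (q : Z -> R) (l : nat) : R :=
  match l with
  | O => 0
  | S _ => sumN (fun n => first_passage q n 0%Z (Z.of_nat l))
  end.

(* ladder_conv q k l = P{ chi_1+...+chi_k = l, tau_1,...,tau_k < infinity }
   (k-fold convolution of the defective ladder height law). *)
Fixpoint ladder_conv (q : Z -> R) (k l : nat) : R :=
  match k with
  | O => if Nat.eqb l 0 then 1 else 0
  | S k' => sum_f_R0 (fun m => ladder_height q m * ladder_conv q k' (l - m)) l
  end.

Definition renewal (q : Z -> R) (l : nat) : R := sumN (fun k => ladder_conv q k l).

From Stdlib Require Import Reals ZArith Lia Lra ClassicalEpsilon FunctionalExtensionality.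
From Coquelicot Require Import Coquelicot.
Open Scope R_scope.

Lemma lim_seq_eq (u : nat -> R) (l : R) : is_lim_seq u l -> lim_seq u = l.
Proof.
  intro H. apply (proj1 (is_lim_seq_Reals u l)) in H. unfold lim_seq.
  destruct excluded_middle_informative as [e|n].
  - destruct constructive_indefinite_description as [l' H']. simpl.
    eapply UL_sequence; eauto.
  - exfalso; apply n; eauto.
Qed.

Lemma lim_seq_divergent (u : nat -> R) : ~ (exists l : R, is_lim_seq u l) -> lim_seq u = 0.
Proof.
  intro H. unfold lim_seq.
  destruct excluded_middle_informative as [[l Hl]|n]; auto.
  exfalso; apply H. exists l. now apply (proj2 (is_lim_seq_Reals u l)).
Qed.

(* [lim_seq] is homogeneous, also on divergent sequences (where it is 0). *)
Lemma lim_seq_scal (c : R) (u : nat -> R) : lim_seq (fun n => c * u n) = c * lim_seq u.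
Proof.
  destruct (Req_dec c 0) as [Hc|Hc].
  - subst. rewrite Rmult_0_l. apply lim_seq_eq.
    apply (is_lim_seq_ext (fun _ => 0)); [intro n; ring | apply (is_lim_seq_const 0)].
  - destruct (classic (exists l : R, is_lim_seq u l)) as [[l Hl]|Hn].
    + rewrite (lim_seq_eq u l Hl). apply lim_seq_eq. apply (is_lim_seq_scal_l u c l Hl).
    + rewrite (lim_seq_divergent u Hn), Rmult_0_r. apply lim_seq_divergent.
      intros [l Hl]. apply Hn. exists (l / c).
      apply (is_lim_seq_ext (fun n => / c * (c * u n))); [intro n; field; auto|].
      replace (l / c) with (/ c * l) by (unfold Rdiv; ring).
      apply (is_lim_seq_scal_l (fun n => c * u n) (/ c) l Hl).
Qed.

Lemma partial_sums_lim (a : nat -> R) (l : R) : is_series a l -> is_lim_seq (sum_f_R0 a) l.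
Proof. intro H. apply (proj2 (is_lim_seq_Reals _ l)). now apply (proj1 (is_series_Reals a l)). Qed.

Lemma series_of_partial_sums (a : nat -> R) (l : R) : is_lim_seq (sum_f_R0 a) l -> is_series a l.
Proof. intro H. apply (proj2 (is_series_Reals a l)). now apply (proj1 (is_lim_seq_Reals _ l)). Qed.

Lemma sumN_eq (u : nat -> R) (l : R) : is_series u l -> sumN u = l.
Proof. intro H. apply lim_seq_eq, partial_sums_lim, H. Qed.

Lemma sumN_scal (c : R) (u : nat -> R) : sumN (fun n => c * u n) = c * sumN u.
Proof.
  unfold sumN. rewrite <- lim_seq_scal. f_equal. apply functional_extensionality.
  intro n. rewrite (scal_sum u n c). apply sum_eq. intros; ring.
Qed.

Lemma sumZ_scal (c : R) (g : Z -> R) : sumZ (fun j => c * g j) = c * sumZ g.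
Proof. unfold sumZ. rewrite !sumN_scal. ring. Qed.

Lemma is_lim_seq_uniq (u : nat -> R) (a b : R) : is_lim_seq u a -> is_lim_seq u b -> a = b.
Proof.
  intros Ha Hb. apply is_lim_seq_unique in Ha. apply is_lim_seq_unique in Hb.
  rewrite Ha in Hb. now injection Hb.
Qed.

Lemma series_le (a b : nat -> R) (la lb : R) : (forall n, a n <= b n) ->
  is_series a la -> is_series b lb -> la <= lb.
Proof.
  intros E Ha Hb. apply (is_lim_seq_le (sum_f_R0 a) (sum_f_R0 b) la lb).
  - intro n. apply sum_Rle. intros; apply E.
  - now apply partial_sums_lim.
  - now apply partial_sums_lim.
Qed.

Lemma series_zero : is_series (fun _ : nat => 0) 0.
Proof.
  apply series_of_partial_sums. apply (is_lim_seq_ext (fun _ => 0)).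
  - intro n. rewrite sum_cte. ring.
  - apply (is_lim_seq_const 0).
Qed.

Lemma series_of_zeros (a : nat -> R) (b : R) : (forall n, a n = 0) -> is_series a b -> b = 0.
Proof.
  intros H Hb. apply is_series_unique in Hb. rewrite <- Hb.
  apply is_series_unique. apply (is_series_ext (fun _ => 0)); auto. apply series_zero.
Qed.

Lemma partial_sum_le (a : nat -> R) (l : R) (J : nat) : (forall n, 0 <= a n) ->
  is_series a l -> sum_f_R0 a J <= l.
Proof.
  intros H0 H. apply partial_sums_lim in H. apply (is_lim_seq_incr_n _ J) in H.
  apply (is_lim_seq_le (fun _ => sum_f_R0 a J) (fun n => sum_f_R0 a (n + J)) (sum_f_R0 a J) l);
    auto; [|apply is_lim_seq_const].
  intro n. induction n; simpl; [lra|]. specialize (H0 (S (n + J))). lra.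
Qed.

Lemma ex_series_bounded_weight (c g : nat -> R) (M : R) : (forall n, 0 <= c n) ->
  ex_series c -> (forall n, Rabs (g n) <= M) -> ex_series (fun n => c n * g n).
Proof.
  intros H0 [l Hl] Hb.
  apply (ex_series_le (fun n => c n * g n) (fun n => M * c n)).
  - intro n. change (norm (c n * g n)) with (Rabs (c n * g n)).
    rewrite Rabs_mult, Rabs_pos_eq by auto. rewrite Rmult_comm.
    apply Rmult_le_compat_r; auto.
  - exists (M * l). apply (is_series_scal_l M c l Hl).
Qed.

Definition is_sumZ (g : Z -> R) (l : R) : Prop :=
  exists a b : R, is_series (fun n => g (Z.of_nat n)) a /\
              is_series (fun n => g (- Z.of_nat (S n))%Z) b /\ l = a + b.

Lemma has_sumZ_is_sumZ (g : Z -> R) (l : R) : has_sumZ g l <-> is_sumZ g l.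
Proof.
  split; intros [a [b [H1 [H2 H3]]]]; exists a, b;
  repeat split; auto; apply is_series_Reals; auto.
Qed.

Lemma sumZ_eq (g : Z -> R) (l : R) : is_sumZ g l -> sumZ g = l.
Proof.
  intros [a [b [H1 [H2 H3]]]]. unfold sumZ. now rewrite (sumN_eq _ _ H1), (sumN_eq _ _ H2).
Qed.

Lemma sumZ_ext (f g : Z -> R) : (forall j, f j = g j) -> sumZ f = sumZ g.
Proof. intro E. f_equal. now apply functional_extensionality. Qed.

Lemma is_sumZ_ext (f g : Z -> R) (l : R) : (forall j, f j = g j) -> is_sumZ f l -> is_sumZ g l.
Proof.
  intros E [a [b [H1 [H2 H3]]]]. exists a, b. repeat split; auto;
  eapply is_series_ext; try eassumption; intros; simpl; auto.
Qed.

Lemma is_sumZ_plus (f g : Z -> R) (a b : R) :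
  is_sumZ f a -> is_sumZ g b -> is_sumZ (fun j => f j + g j) (a + b).
Proof.
  intros [a1 [b1 [H1 [H2 H3]]]] [a2 [b2 [G1 [G2 G3]]]].
  exists (a1 + a2), (b1 + b2). repeat split.
  - apply (is_series_plus _ _ _ _ H1 G1).
  - apply (is_series_plus _ _ _ _ H2 G2).
  - subst; ring.
Qed.

Lemma is_sumZ_scal (c : R) (f : Z -> R) (a : R) : is_sumZ f a -> is_sumZ (fun j => c * f j) (c * a).
Proof.
  intros [a1 [b1 [H1 [H2 H3]]]]. exists (c * a1), (c * b1). repeat split.
  - apply (is_series_scal_l c _ _ H1).
  - apply (is_series_scal_l c _ _ H2).
  - subst; ring.
Qed.

Lemma is_sumZ_zero : is_sumZ (fun _ => 0) 0.
Proof. exists 0, 0. repeat split; try apply series_zero. ring. Qed.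

Lemma is_sumZ_le (f g : Z -> R) (a b : R) :
  (forall j, f j <= g j) -> is_sumZ f a -> is_sumZ g b -> a <= b.
Proof.
  intros E [a1 [b1 [H1 [H2 ->]]]] [a2 [b2 [G1 [G2 ->]]]].
  assert (a1 <= a2) by (refine (series_le _ _ _ _ _ H1 G1); auto).
  assert (b1 <= b2) by (refine (series_le _ _ _ _ _ H2 G2); auto).
  lra.
Qed.

Lemma is_sumZ_average (q g : Z -> R) : (forall j, 0 <= q j) -> is_sumZ q 1 ->
  (forall j, 0 <= g j <= 1) ->
  is_sumZ (fun j => q j * g j) (sumZ (fun j => q j * g j)) /\
  0 <= sumZ (fun j => q j * g j) <= 1.
Proof.
  intros H0 [a [b [H1 [H2 H3]]]] Hg.
  assert (Hb : forall j, Rabs (g j) <= 1) by (intro j; rewrite Rabs_pos_eq; apply Hg).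
  assert (E1 : ex_series (fun n => q (Z.of_nat n) * g (Z.of_nat n)))
    by (apply (ex_series_bounded_weight _ _ 1); auto; exists a; auto).
  assert (E2 : ex_series (fun n => q (- Z.of_nat (S n))%Z * g (- Z.of_nat (S n))%Z))
    by (apply (ex_series_bounded_weight _ _ 1); auto; exists b; auto).
  assert (Hsum : is_sumZ (fun j => q j * g j) (sumZ (fun j => q j * g j))).
  { apply Series_correct in E1. apply Series_correct in E2.
    assert (HH : is_sumZ (fun j => q j * g j) (Series (fun n => q (Z.of_nat n) * g (Z.of_nat n)) +
       Series (fun n => q (- Z.of_nat (S n))%Z * g (- Z.of_nat (S n))%Z)))
      by (exists (Series (fun n => q (Z.of_nat n) * g (Z.of_nat n))),
            (Series (fun n => q (- Z.of_nat (S n))%Z * g (- Z.of_nat (S n))%Z)); auto).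
    now rewrite (sumZ_eq _ _ HH). }
  split; [exact Hsum|split].
  - apply (is_sumZ_le (fun _ => 0) (fun j => q j * g j)); auto using is_sumZ_zero.
    intro j; specialize (Hg j); specialize (H0 j); nra.
  - apply (is_sumZ_le (fun j => q j * g j) q); [| |exists a, b]; auto.
    intro j; specialize (Hg j); specialize (H0 j); nra.
Qed.

Lemma is_sumZ_shift1 (g : Z -> R) (s : R) : is_sumZ g s -> is_sumZ (fun k => g (k - 1)%Z) s.
Proof.
  intros [a [b [Ha [Hb E]]]].
  exists (a + g (-1)%Z), (b - g (-1)%Z). split; [|split].
  - apply is_series_decr_1.
    match goal with |- is_series _ ?x => replace x with a by (unfold plus, opp; simpl; ring) end.
    apply (is_series_ext (fun n => g (Z.of_nat n))); auto.
    intro n. f_equal. lia.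
  - apply (is_series_ext (fun k => g (- Z.of_nat (S (S k)))%Z)); [intro n; f_equal; lia|].
    apply (is_series_incr_1 (fun n => g (- Z.of_nat (S n))%Z)). 
    match goal with |- is_series _ ?x => replace x with b by (unfold plus; simpl; ring) end.
    exact Hb.
  - rewrite E; ring.
Qed.

Lemma is_sumZ_from (i : nat) (g : Z -> R) (s : R) : is_sumZ g s ->
  (forall k, (k < - Z.of_nat i)%Z -> g k = 0) ->
  is_series (fun j : nat => g (Z.of_nat j - Z.of_nat i)%Z) s.
Proof.
  revert g s. induction i; intros g s H Hzero.
  - destruct H as [a [b [Ha [Hb E]]]].
    assert (b = 0) by (apply (series_of_zeros (fun n => g (- Z.of_nat (S n))%Z) b); auto; intro; apply Hzero; lia).
    subst. rewrite Rplus_0_r. apply (is_series_ext (fun n => g (Z.of_nat n))); auto.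
    intro; f_equal; lia.
  - apply is_sumZ_shift1 in H. specialize (IHi _ _ H).
    apply (is_series_ext (fun j => g (Z.of_nat j - Z.of_nat i - 1)%Z)).
    + intro; f_equal; lia.
    + apply IHi. intros; apply Hzero; lia.
Qed.

(* [sum_lt f n] = sum_{k < n} f k; unlike [sum_f_R0] it allows empty ranges,
   which occur in the decomposition at the first exit below 0. *)
Fixpoint sum_lt (f : nat -> R) (n : nat) : R :=
  match n with O => 0 | S n' => sum_lt f n' + f n' end.

Lemma sum_lt_ext (f g : nat -> R) (n : nat) :
  (forall k, (k < n)%nat -> f k = g k) -> sum_lt f n = sum_lt g n.
Proof. induction n; simpl; intros; auto. rewrite IHn, H; auto. Qed.

Lemma sum_lt_plus (f g : nat -> R) (n : nat) :
  sum_lt (fun k => f k + g k) n = sum_lt f n + sum_lt g n.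
Proof. induction n; simpl; [ring|rewrite IHn; ring]. Qed.

Lemma sum_lt_scal (c : R) (f : nat -> R) (n : nat) : sum_lt (fun k => c * f k) n = c * sum_lt f n.
Proof. induction n; simpl; [ring|rewrite IHn; ring]. Qed.

Lemma sum_lt_zero (n : nat) : sum_lt (fun _ => 0) n = 0.
Proof. induction n; simpl; [ring|rewrite IHn; ring]. Qed.

Lemma sum_lt_first (f : nat -> R) (n : nat) : sum_lt f (S n) = f O + sum_lt (fun k => f (S k)) n.
Proof. induction n; simpl in *; [ring|rewrite IHn; ring]. Qed.

Lemma sum_lt_sum_f_R0 (f : nat -> R) (n : nat) : sum_lt f (S n) = sum_f_R0 f n.
Proof. induction n; simpl in *; [ring|rewrite <- IHn; simpl; ring]. Qed.

Lemma sum_lt_swap (F : nat -> nat -> R) (n m : nat) :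
  sum_lt (fun k => sum_lt (fun l => F k l) m) n = sum_lt (fun l => sum_lt (fun k => F k l) n) m.
Proof.
  induction n; simpl.
  - now rewrite sum_lt_zero.
  - now rewrite IHn, <- sum_lt_plus.
Qed.

Lemma sum_lt_single (f : nat -> R) (k n : nat) : (forall l, l <> k -> f l = 0) ->
  sum_lt f n = if Nat.ltb k n then f k else 0.
Proof.
  intro H. induction n; simpl; auto.
  rewrite IHn. destruct (Nat.ltb_spec k n); destruct (Nat.ltb_spec k (S n)); try lia.
  - rewrite (H n); [ring|lia].
  - assert (k = n) by lia. subst. ring.
  - rewrite (H n); [ring|lia].
Qed.

Lemma is_sumZ_sum_lt (G : nat -> Z -> R) (s : nat -> R) (n : nat) :
  (forall k, is_sumZ (G k) (s k)) -> is_sumZ (fun j => sum_lt (fun k => G k j) n) (sum_lt s n).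
Proof.
  intro H. induction n; simpl.
  - apply is_sumZ_zero.
  - apply is_sumZ_plus; auto.
Qed.

Lemma is_lim_seq_sum_lt (U : nat -> nat -> R) (L : nat -> R) (n : nat) :
  (forall k, is_lim_seq (U k) (L k)) -> is_lim_seq (fun N => sum_lt (fun k => U k N) n) (sum_lt L n).
Proof.
  intro H. induction n; simpl.
  - apply (is_lim_seq_const 0).
  - apply (is_lim_seq_plus' _ _ _ _ IHn (H n)).
Qed.

Lemma sum_f_R0_swap (F : nat -> nat -> R) (n m : nat) :
  sum_f_R0 (fun k => sum_f_R0 (fun l => F k l) m) n =
  sum_f_R0 (fun l => sum_f_R0 (fun k => F k l) n) m.
Proof.
  rewrite <- !sum_lt_sum_f_R0.
  rewrite (sum_lt_ext (fun k => sum_f_R0 _ m) (fun k => sum_lt (fun l => F k l) (S m)))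
    by (intros; symmetry; apply sum_lt_sum_f_R0).
  rewrite (sum_lt_ext (fun l => sum_f_R0 _ n) (fun l => sum_lt (fun k => F k l) (S n)))
    by (intros; symmetry; apply sum_lt_sum_f_R0).
  apply sum_lt_swap.
Qed.

Lemma sum_f_R0_zero (f : nat -> R) (n : nat) : (forall k, (k <= n)%nat -> f k = 0) ->
  sum_f_R0 f n = 0.
Proof.
  intro H. induction n; simpl; [apply H; lia|].
  rewrite IHn, H; [ring|lia|intros; apply H; lia].
Qed.

Lemma sum_f_R0_tail_zero (f : nat -> R) (n N : nat) : (forall k, (n < k)%nat -> f k = 0) ->
  sum_f_R0 f (N + n) = sum_f_R0 f n.
Proof. intro H. induction N; simpl; auto. rewrite IHN, H; [ring|lia]. Qed.

Lemma series_head_tail_bound (c s : nat -> R) (C S : R) (J : nat) :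
  (forall j, 0 <= c j) -> is_series c C -> (forall j, s j <= 1) ->
  is_series (fun j => c j * s j) S ->
  S <= sum_f_R0 (fun j => c j * s j) J + (C - sum_f_R0 c J).
Proof.
  intros c0 Hc s1 Hs.
  assert (HD := is_series_plus _ _ _ _ Hc (is_series_scal_l (-1) _ _ Hs)).
  assert (P := partial_sum_le (fun j => c j + -1 * (c j * s j)) _ J
                 ltac:(intro n; specialize (s1 n); specialize (c0 n); nra) HD).
  change (plus C (scal (-1) S)) with (C + -1 * S) in P.
  rewrite (sum_eq _ (fun j => c j - c j * s j)), minus_sum in P by (intros; ring).
  lra.
Qed.

Lemma decreasing_limit_01 (s : nat -> R) (m : R) : (forall N, 0 <= s N <= 1) ->
  (forall N, s (S N) <= s N) -> is_lim_seq s m -> (forall N, m <= s N) /\ 0 <= m <= 1.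
Proof.
  intros s01 sdec Hm.
  assert (m_le : forall N, m <= s N) by (intro N; now apply is_lim_seq_decr_compare).
  split; [exact m_le|split].
  - apply (is_lim_seq_le (fun _ => 0) s 0 m); auto using is_lim_seq_const. intro; apply s01.
  - specialize (m_le O). specialize (s01 O). lra.
Qed.

Lemma limit_series_cut (c : nat -> R) (s : nat -> nat -> R) (m : nat -> R)
  (C : R) (SS : nat -> R) (Sl : R) (J : nat) :
  (forall j, 0 <= c j) -> is_series c C -> (forall N j, s N j <= 1) ->
  (forall j, is_lim_seq (fun N => s N j) (m j)) ->
  (forall N, is_series (fun j => c j * s N j) (SS N)) -> is_lim_seq SS Sl ->
  Sl <= sum_f_R0 (fun j => c j * m j) J + (C - sum_f_R0 c J).
Proof.
  intros c0 Hc s1 Hm HS HSl.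
  assert (Hhead : is_lim_seq (fun N => sum_f_R0 (fun j => c j * s N j) J)
                             (sum_f_R0 (fun j => c j * m j) J)).
  { rewrite <- sum_lt_sum_f_R0.
    apply (is_lim_seq_ext (fun N => sum_lt (fun j => c j * s N j) (S J))).
    { intro; apply sum_lt_sum_f_R0. }
    apply (is_lim_seq_sum_lt (fun j N => c j * s N j)). intro j.
    apply (is_lim_seq_scal_l (fun N => s N j) (c j) (m j)); auto. }
  refine (is_lim_seq_le SS _ Sl _ _ HSl (is_lim_seq_plus' _ _ _ _ Hhead (is_lim_seq_const _))).
  intro N. apply (series_head_tail_bound c (s N)); auto.
Qed.

(* The limit is >= sum_j c_j m(j) termwise, and <= it up to every tail of c. *)
Lemma series_decreasing_limit (c : nat -> R) (s : nat -> nat -> R) (m : nat -> R)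
  (C : R) (SS : nat -> R) (Sl : R) :
  (forall j, 0 <= c j) -> is_series c C -> (forall N j, 0 <= s N j <= 1) ->
  (forall N j, s (S N) j <= s N j) -> (forall j, is_lim_seq (fun N => s N j) (m j)) ->
  (forall N, is_series (fun j => c j * s N j) (SS N)) -> is_lim_seq SS Sl ->
  is_series (fun j => c j * m j) Sl.
Proof.
  intros c0 Hc s01 sdec Hm HS HSl.
  assert (Hm01 : forall j, (forall N, m j <= s N j) /\ 0 <= m j <= 1)
    by (intro j; apply (decreasing_limit_01 (fun N => s N j)); auto).
  assert (Ex : ex_series (fun j => c j * m j)).
  { apply (ex_series_bounded_weight c m 1); auto.
    - exists C; auto.
    - intro j. rewrite Rabs_pos_eq; apply Hm01. }
  apply Series_correct in Ex. set (T := Series (fun j => c j * m j)) in *.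
  replace Sl with T; auto. apply Rle_antisym.
  - apply (is_lim_seq_le (fun _ => T) SS T Sl); auto; [|apply is_lim_seq_const].
    intro N. apply (series_le (fun j => c j * m j) (fun j => c j * s N j)); auto.
    intro j. apply Rmult_le_compat_l; [auto|apply Hm01].
  - assert (Hcut : forall J, Sl <= T + (C - sum_f_R0 c J)).
    { intro J.
      assert (sum_f_R0 (fun j => c j * m j) J <= T).
      { apply partial_sum_le; auto. intro n. specialize (c0 n). specialize (Hm01 n). nra. }
      assert (Sl <= sum_f_R0 (fun j => c j * m j) J + (C - sum_f_R0 c J))
        by (apply (limit_series_cut c s m C SS); auto; intros; apply s01).
      lra. }
    assert (Ltail : is_lim_seq (fun J => T + (C - sum_f_R0 c J)) (T + (C - C))).
    { apply is_lim_seq_plus'; [apply is_lim_seq_const|].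
      apply is_lim_seq_minus'; [apply is_lim_seq_const|]. now apply partial_sums_lim. }
    replace (T + (C - C)) with T in Ltail by ring.
    apply (is_lim_seq_le (fun _ => Sl) _ Sl _ Hcut (is_lim_seq_const Sl) Ltail).
Qed.

(* If b decreases to B, its increments form an absolutely summable series with
   sum B; hence, for a nonnegative summable a with sum A, the convolutions
   sum_{k <= N} a_k b_{N-k} converge to A * B (Mertens' theorem). *)
Definition increments (b : nat -> R) (n : nat) : R :=
  match n with O => b O | S m => b (S m) - b m end.

Lemma increments_series (b : nat -> R) (B : R) :
  (forall n, b (S n) <= b n) -> is_lim_seq b B ->
  is_series (increments b) B /\ ex_series (fun n => Rabs (increments b n)).
Proof.
  intros Hd Hb.
  assert (Sc : forall N, sum_f_R0 (increments b) N = b N)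
    by (induction N; simpl; auto; rewrite IHN; simpl; ring).
  assert (HbB : forall n, B <= b n) by (apply is_lim_seq_decr_compare; auto).
  assert (Sac : forall N, sum_f_R0 (fun n => Rabs (increments b n)) N = Rabs (b O) + b O - b N).
  { induction N; simpl; [ring|]. rewrite IHN.
    rewrite (Rabs_left1 (b (S N) - b N)) by (specialize (Hd N); lra). ring. }
  split.
  - apply series_of_partial_sums. exact (is_lim_seq_ext b _ B (fun n => eq_sym (Sc n)) Hb).
  - destruct (ex_finite_lim_seq_incr (sum_f_R0 (fun n => Rabs (increments b n)))
                                     (Rabs (b O) + b O - B)) as [l Hl].
    + intro n. rewrite tech5. assert (0 <= Rabs (increments b (S n))) by apply Rabs_pos. lra.
    + intro n. rewrite Sac. specialize (HbB n). lra.
    + exists l. now apply series_of_partial_sums.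
Qed.

Lemma convolution_limit (a b : nat -> R) (A B : R) : (forall n, 0 <= a n) -> is_series a A ->
  (forall n, b (S n) <= b n) -> is_lim_seq b B ->
  is_lim_seq (fun N => sum_f_R0 (fun k => a k * b (N - k)%nat) N) (A * B).
Proof.
  intros Ha0 Ha Hd Hb.
  destruct (increments_series b B Hd Hb) as [Hc Eac].
  assert (Eaa : ex_series (fun n => Rabs (a n))).
  { exists A. apply (is_series_ext a); auto. intro n. rewrite Rabs_pos_eq; auto. }
  assert (HM := partial_sums_lim _ _ (is_series_mult a (increments b) A B Ha Hc Eaa Eac)).
  refine (is_lim_seq_ext _ _ _ _ HM). intro N.
  induction N.
  - reflexivity.
  - rewrite tech5, IHN, !tech5.
    assert (E : sum_f_R0 (fun k => a k * increments b (S N - k)%nat) N =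
      sum_f_R0 (fun k => a k * b (S N - k)%nat) N - sum_f_R0 (fun k => a k * b (N - k)%nat) N).
    { rewrite <- minus_sum. apply sum_eq; intros k Hk.
      rewrite Nat.sub_succ_l by lia. simpl increments. ring. }
    rewrite E, !Nat.sub_diag. simpl increments. ring.
Qed.

(* Indeed the
   increments of m satisfy the equation defining u, up to the factor m(0). *)
Lemma renewal_equation_solution (a u m : nat -> R) :
  a O = 0 -> u O = 1 ->
  (forall k, u (S k) = sum_f_R0 (fun l => a l * u (S k - l)%nat) (S k)) ->
  (forall i, m i = m O + sum_f_R0 (fun l => a l * m (i - l)%nat) i) ->
  forall i, m i = m O * sum_f_R0 u i.
Proof.
  intros a0 u0 Hu Hm.
  set (D := increments m).
  assert (HD : forall k, D (S k) = sum_f_R0 (fun l => a l * D (S k - l)%nat) (S k)).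
  { intro k. simpl D at 1. rewrite (Hm (S k)), (Hm k), !tech5, Nat.sub_diag.
    rewrite (sum_eq (fun l => a l * D (S k - l)%nat)
                    (fun l => a l * m (S k - l)%nat - a l * m (k - l)%nat)).
    - rewrite minus_sum. simpl D. ring.
    - intros l Hl. rewrite Nat.sub_succ_l by lia. simpl D. ring. }
  assert (Du : forall i, D i = m O * u i).
  { intro i. induction i as [i IH] using (well_founded_induction lt_wf). destruct i.
    - simpl D. rewrite u0. ring.
    - rewrite HD, Hu, scal_sum. apply sum_eq. intros l Hl. destruct l.
      + rewrite a0. ring.
      + rewrite IH by lia. ring. }
  assert (Dsum : forall i, m i = sum_f_R0 D i) by (induction i; simpl; auto; rewrite <- IHi; ring).
  intro i. rewrite Dsum, scal_sum. apply sum_eq. intros; rewrite Du; ring.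
Qed.

Lemma ladder_conv_below (q : Z -> R) (k l : nat) : (l < k)%nat -> ladder_conv q k l = 0.
Proof.
  revert l. induction k; intros l Hl; [lia|]. simpl. apply sum_f_R0_zero. intros m Hm.
  destruct m; simpl ladder_height; [ring|]. rewrite IHk; [ring|lia].
Qed.

Lemma renewal_finite (q : Z -> R) (l : nat) : renewal q l = sum_f_R0 (fun k => ladder_conv q k l) l.
Proof.
  unfold renewal. apply sumN_eq, series_of_partial_sums.
  apply (is_lim_seq_incr_n _ l).
  apply (is_lim_seq_ext (fun _ => sum_f_R0 (fun k => ladder_conv q k l) l)).
  - intro n. symmetry. apply sum_f_R0_tail_zero. intros; now apply ladder_conv_below.
  - apply is_lim_seq_const.
Qed.

Lemma renewal_0 (q : Z -> R) : renewal q 0 = 1.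
Proof. now rewrite renewal_finite. Qed.

Lemma renewal_S (q : Z -> R) (k : nat) : renewal q (S k) =
  sum_f_R0 (fun m => ladder_height q m * renewal q (S k - m)) (S k).
Proof.
  rewrite renewal_finite, decomp_sum by lia. simpl pred.
  change (ladder_conv q 0 (S k)) with 0. rewrite Rplus_0_l.
  cbn [ladder_conv]. rewrite sum_f_R0_swap. apply sum_eq. intros m Hm.
  rewrite (sum_eq _ (fun j => ladder_conv q j (S k - m) * ladder_height q m)) by (intros; ring).
  rewrite <- scal_sum. destruct m.
  - simpl ladder_height. ring.
  - f_equal. rewrite renewal_finite.
    replace k with ((k - (S k - S m)) + (S k - S m))%nat at 1 by lia.
    apply sum_f_R0_tail_zero. intros; apply ladder_conv_below; lia.
Qed.

(* [exit_then_stay q N x i] is the probability that the walk with step law q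
   started at x leaves Z_+ for the first time at some n <= N, landing at -(l+1)
   with l < i, and then stays above -(i-(l+1)) until time N: the part of
   P{x + i + S_k >= 0, k <= N} not accounted for by the walk from x itself. *)
Definition exit_then_stay (q : Z -> R) (N : nat) (x : Z) (i : nat) : R :=
  sum_lt (fun n => sum_lt (fun l =>
     first_passage q n x (Z.of_nat (S l)) * stay q (N - n) (Z.of_nat i - Z.of_nat (S l))) i) (S N).

Section StepLaw.

Variable q : Z -> R.
Hypothesis q_nonneg : forall j, 0 <= q j.
Hypothesis q_total : is_sumZ q 1.

Lemma stay_neg (N : nat) (x : Z) : (x < 0)%Z -> stay q N x = 0.
Proof. intro H. destruct N; simpl; destruct (Z.leb_spec 0 x); auto; lia. Qed.

Lemma stay_0 (x : Z) : (0 <= x)%Z -> stay q O x = 1.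
Proof. intro H. simpl. destruct (Z.leb_spec 0 x); auto; lia. Qed.

Lemma stay_S (N : nat) (x : Z) : (0 <= x)%Z ->
  stay q (S N) x = sumZ (fun j => q j * stay q N (x + j)).
Proof. intro H. simpl. destruct (Z.leb_spec 0 x); auto; lia. Qed.

Lemma stay_01 (N : nat) (x : Z) : 0 <= stay q N x <= 1.
Proof.
  revert x. induction N; intro x; (destruct (Z.leb_spec 0 x); [|rewrite stay_neg; auto; lra]).
  - rewrite stay_0; auto; lra.
  - rewrite stay_S; auto. now apply (is_sumZ_average q (fun j => stay q N (x + j))).
Qed.

Lemma stay_step_sum (N : nat) (x : Z) :
  is_sumZ (fun j => q j * stay q N (x + j)) (sumZ (fun j => q j * stay q N (x + j))).
Proof. apply (is_sumZ_average q (fun j => stay q N (x + j))); auto using stay_01. Qed.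

Lemma stay_decreasing (N : nat) (x : Z) : stay q (S N) x <= stay q N x.
Proof.
  revert x. induction N; intro x; (destruct (Z.leb_spec 0 x); [|rewrite !stay_neg; auto; lra]).
  - rewrite stay_0; auto. apply stay_01.
  - rewrite !(stay_S _ x); auto.
    refine (is_sumZ_le _ _ _ _ _ (stay_step_sum _ _) (stay_step_sum _ _)).
    intro j. apply Rmult_le_compat_l; auto.
Qed.

Lemma min_prob_lim (x : Z) : is_lim_seq (fun N => stay q N x) (min_prob q x).
Proof.
  destruct (ex_finite_lim_seq_decr (fun N => stay q N x) 0) as [l Hl].
  - intro; apply stay_decreasing.
  - intro; apply stay_01.
  - unfold min_prob. now rewrite (lim_seq_eq _ l Hl).
Qed.

Lemma min_prob_01 (x : Z) : 0 <= min_prob q x <= 1.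
Proof.
  apply (decreasing_limit_01 (fun N => stay q N x));
    auto using stay_01, stay_decreasing, min_prob_lim.
Qed.

(* x |-> P{x + S_n >= 0 for all n} is harmonic for the walk killed at leaving
   Z_+: let N -> oo in stay (N+1) i = sum_j q(j - i) stay N j. *)
Lemma min_prob_harmonic (i : nat) :
  is_series (fun j : nat => q (Z.of_nat j - Z.of_nat i)%Z * min_prob q (Z.of_nat j))
            (min_prob q (Z.of_nat i)).
Proof.
  assert (HS : forall N, is_series (fun j : nat => q (Z.of_nat j - Z.of_nat i)%Z * stay q N (Z.of_nat j))
                                  (sumZ (fun k => q k * stay q N (Z.of_nat i + k)))).
  { intro N.
    apply (is_series_ext (fun j : nat => (fun k => q k * stay q N (Z.of_nat i + k)) (Z.of_nat j - Z.of_nat i)%Z)).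
    - intro j. cbv beta. do 2 f_equal. lia.
    - apply (is_sumZ_from i (fun k => q k * stay q N (Z.of_nat i + k))); [apply stay_step_sum|].
      intros k Hk. rewrite stay_neg by lia. ring. }
  apply (series_decreasing_limit (fun j => q (Z.of_nat j - Z.of_nat i)%Z) (fun N j => stay q N (Z.of_nat j))
           (fun j => min_prob q (Z.of_nat j)) (sumZ (fun k => q k * stay q 0 (Z.of_nat i + k)))
           (fun N => stay q (S N) (Z.of_nat i))); auto using stay_01, stay_decreasing, min_prob_lim.
  - refine (is_series_ext _ _ _ _ (HS O)). intro j. rewrite stay_0 by lia. apply Rmult_1_r.
  - intro N. rewrite stay_S by lia. apply HS.
  - apply (is_lim_seq_incr_1 (fun N => stay q N (Z.of_nat i))). apply min_prob_lim.
Qed.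

Lemma first_passage_neg (n : nat) (x l : Z) : (x < 0)%Z -> first_passage q (S n) x l = 0.
Proof. intro H. simpl. destruct (Z.leb_spec 0 x); auto; lia. Qed.

Lemma first_passage_0 (x l : Z) : (0 <= x)%Z -> (0 < l)%Z -> first_passage q 0 x l = 0.
Proof. intros. simpl. destruct (Z.eqb_spec x (-l)); auto; lia. Qed.

Lemma first_passage_S (n : nat) (x l : Z) : (0 <= x)%Z ->
  first_passage q (S n) x l = sumZ (fun j => q j * first_passage q n (x + j) l).
Proof. intro H. simpl. destruct (Z.leb_spec 0 x); auto; lia. Qed.

Lemma first_passage_01 (n : nat) (x l : Z) : 0 <= first_passage q n x l <= 1.
Proof.
  revert x. induction n; intro x.
  - simpl. destruct (Z.eqb x (- l)); lra.
  - destruct (Z.leb_spec 0 x); [|rewrite first_passage_neg; auto; lra].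
    rewrite first_passage_S; auto.
    now apply (is_sumZ_average q (fun j => first_passage q n (x + j) l)).
Qed.

Lemma first_passage_step_sum (n : nat) (x l : Z) :
  is_sumZ (fun j => q j * first_passage q n (x + j) l)
          (sumZ (fun j => q j * first_passage q n (x + j) l)).
Proof. apply (is_sumZ_average q (fun j => first_passage q n (x + j) l)); auto using first_passage_01. Qed.

(* First passages into a fixed level -l < 0 at different times are disjoint events. *)
Lemma first_passage_total (l : Z) (N : nat) (x : Z) : (0 < l)%Z ->
  sum_lt (fun n => first_passage q n x l) N <= 1.
Proof.
  intro Hl. revert x. induction N; intro x; [simpl; lra|].
  rewrite sum_lt_first. destruct (Z.leb_spec 0 x).
  - rewrite first_passage_0, Rplus_0_l by auto.
    rewrite (sum_lt_ext _ (fun n => sumZ (fun j => q j * first_passage q n (x + j) l)))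
      by (intros; apply first_passage_S; auto).
    refine (is_sumZ_le _ _ _ _ _ (is_sumZ_sum_lt _ _ N (fun n => first_passage_step_sum n x l)) q_total).
    intro j. cbv beta. rewrite sum_lt_scal.
    rewrite <- (Rmult_1_r (q j)) at 2. apply Rmult_le_compat_l; auto.
  - rewrite (sum_lt_ext _ (fun _ => 0)) by (intros; apply first_passage_neg; auto).
    rewrite sum_lt_zero. destruct (first_passage_01 0 x l). lra.
Qed.

Lemma ladder_height_series (L : nat) :
  is_series (fun n => first_passage q n 0 (Z.of_nat (S L))) (ladder_height q (S L)).
Proof.
  destruct (ex_finite_lim_seq_incr (sum_f_R0 (fun n => first_passage q n 0 (Z.of_nat (S L)))) 1)
    as [a Ha].
  - intro n. rewrite tech5. assert (H := first_passage_01 (S n) 0 (Z.of_nat (S L))). lra.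
  - intro n. rewrite <- sum_lt_sum_f_R0. apply first_passage_total. lia.
  - apply series_of_partial_sums in Ha. unfold ladder_height. now rewrite (sumN_eq _ _ Ha).
Qed.

(* Below 0 the walk from x has already exited, at time 0, at the level x. *)
Lemma stay_shift_neg (i N : nat) (x : Z) : (x < 0)%Z ->
  stay q N (x + Z.of_nat i) = stay q N x + exit_then_stay q N x i.
Proof.
  intro Hx. rewrite (stay_neg N x Hx), Rplus_0_l. unfold exit_then_stay. rewrite sum_lt_first.
  rewrite (sum_lt_ext (fun k => sum_lt _ i) (fun _ => 0)).
  2:{ intros n _. rewrite (sum_lt_ext _ (fun _ => 0)); [apply sum_lt_zero|].
      intros. rewrite first_passage_neg; auto; ring. }
  rewrite sum_lt_zero, Rplus_0_r, Nat.sub_0_r.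
  set (k := Z.to_nat (- x - 1)).
  assert (Ek : x = (- Z.of_nat (S k))%Z) by (unfold k; lia). clearbody k.
  rewrite (sum_lt_single _ k).
  2:{ intros l Hl. cbn [first_passage]. destruct (Z.eqb_spec x (- Z.of_nat (S l))); [|ring].
      exfalso. apply Hl. lia. }
  cbn [first_passage]. destruct (Z.eqb_spec x (- Z.of_nat (S k))); [|lia].
  destruct (Nat.ltb_spec k i).
  - rewrite Rmult_1_l. f_equal. lia.
  - rewrite stay_neg; [reflexivity|lia].
Qed.

Lemma exit_then_stay_step (i N : nat) (x : Z) : (0 <= x)%Z ->
  is_sumZ (fun j => q j * exit_then_stay q N (x + j) i) (exit_then_stay q (S N) x i).
Proof.
  intro Hx.
  assert (E : exit_then_stay q (S N) x i = sum_lt (fun n => sum_lt (fun l =>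
    sumZ (fun j => q j * first_passage q n (x + j) (Z.of_nat (S l))) *
    stay q (N - n) (Z.of_nat i - Z.of_nat (S l))) i) (S N)).
  { unfold exit_then_stay. rewrite sum_lt_first.
    rewrite (sum_lt_ext (fun l => first_passage q 0 x _ * _) (fun _ => 0))
      by (intros; rewrite first_passage_0; auto; [ring|lia]).
    rewrite sum_lt_zero, Rplus_0_l. apply sum_lt_ext. intros n _. apply sum_lt_ext. intros l _.
    now rewrite first_passage_S. }
  rewrite E.
  apply (is_sumZ_ext (fun j => sum_lt (fun n => sum_lt (fun l =>
     stay q (N - n) (Z.of_nat i - Z.of_nat (S l)) *
     (q j * first_passage q n (x + j) (Z.of_nat (S l)))) i) (S N))).
  { intro j. unfold exit_then_stay. rewrite <- sum_lt_scal. apply sum_lt_ext; intros.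
    rewrite <- sum_lt_scal. apply sum_lt_ext; intros. ring. }
  apply is_sumZ_sum_lt. intro n. apply is_sumZ_sum_lt. intro l.
  rewrite Rmult_comm. apply is_sumZ_scal, first_passage_step_sum.
Qed.

(* Decomposition at the first exit below 0: starting i units higher, the walk
   stays nonnegative iff the walk from x does, or it exits at -(l+1), l < i,
   and the remaining path stays above -(i - (l+1)). *)
Lemma stay_shift (i N : nat) (x : Z) :
  stay q N (x + Z.of_nat i) = stay q N x + exit_then_stay q N x i.
Proof.
  revert x. induction N; intro x; (destruct (Z.leb_spec 0 x); [|now apply stay_shift_neg]).
  - unfold exit_then_stay. rewrite sum_lt_first. cbn [sum_lt].
    rewrite (sum_lt_ext _ (fun _ => 0)) by (intros; rewrite first_passage_0; auto; [ring|lia]).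
    rewrite sum_lt_zero, !stay_0 by lia. ring.
  - rewrite (stay_S N (x + Z.of_nat i)), (stay_S N x) by lia.
    rewrite (sumZ_ext _ (fun j => q j * stay q N (x + j) + q j * exit_then_stay q N (x + j) i)).
    2:{ intro j. rewrite <- Rmult_plus_distr_l, <- IHN. do 2 f_equal. lia. }
    now rewrite (sumZ_eq _ _ (is_sumZ_plus _ _ _ _ (stay_step_sum N x) (exit_then_stay_step i N x H))).
Qed.

(* Renewal equation for m(i) = P{min_n S_n >= -i}: let N -> oo in the
   decomposition at x = 0; the double sum over exit times is a convolution. *)
Lemma min_prob_renewal_equation (i : nat) :
  min_prob q (Z.of_nat i) = min_prob q 0 +
   sum_lt (fun l => ladder_height q (S l) * min_prob q (Z.of_nat i - Z.of_nat (S l))) i.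
Proof.
  apply (is_lim_seq_uniq (fun N => stay q N (Z.of_nat i))); [apply min_prob_lim|].
  apply (is_lim_seq_ext (fun N => stay q N 0 + sum_lt (fun l => sum_f_R0 (fun n =>
      first_passage q n 0 (Z.of_nat (S l)) * stay q (N - n) (Z.of_nat i - Z.of_nat (S l))) N) i)).
  { intro N. rewrite <- (Z.add_0_l (Z.of_nat i)) at 1. rewrite (stay_shift i N 0).
    f_equal. unfold exit_then_stay. rewrite sum_lt_swap. apply sum_lt_ext. intros.
    symmetry. apply sum_lt_sum_f_R0. }
  apply is_lim_seq_plus'; [apply min_prob_lim|].
  apply (is_lim_seq_sum_lt (fun l N => sum_f_R0 (fun n =>
      first_passage q n 0 (Z.of_nat (S l)) * stay q (N - n) (Z.of_nat i - Z.of_nat (S l))) N)).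
  intro l.
  apply (convolution_limit (fun n => first_passage q n 0 (Z.of_nat (S l)))
                           (fun k => stay q k (Z.of_nat i - Z.of_nat (S l))));
    auto using ladder_height_series, stay_decreasing, min_prob_lim.
  intro; apply first_passage_01.
Qed.

Lemma min_prob_renewal (i : nat) :
  min_prob q (Z.of_nat i) = min_prob q 0 * sum_f_R0 (renewal q) i.
Proof.
  apply (renewal_equation_solution (ladder_height q) (renewal q) (fun i => min_prob q (Z.of_nat i))).
  - reflexivity.
  - apply renewal_0.
  - apply renewal_S.
  - intro k. rewrite min_prob_renewal_equation. f_equal.
    rewrite <- sum_lt_sum_f_R0, sum_lt_first. simpl ladder_height. rewrite Rmult_0_l, Rplus_0_l.
    apply sum_lt_ext. intros l Hl. do 2 f_equal. lia.
Qed.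

End StepLaw.

(* Exponential tilting: a path of the tilted walk from x to -l has probability
   e^{-beta (l + x)} times that of the original walk, since the tilt factors
   e^{beta xi_k} multiply to e^{beta (S_n)}. *)
Lemma first_passage_tilt (p : Z -> R) (beta : R) (n : nat) (x l : Z) :
  first_passage (tilt beta p) n x l = exp (- beta * (IZR l + IZR x)) * first_passage p n x l.
Proof.
  revert x. induction n; intro x.
  - cbn [first_passage]. destruct (Z.eqb_spec x (- l)); [|ring].
    subst x. rewrite opp_IZR. replace (- beta * (IZR l + - IZR l)) with 0 by ring.
    rewrite exp_0. ring.
  - destruct (Z.leb_spec 0 x); [|rewrite !first_passage_neg; auto; ring].
    rewrite !first_passage_S, <- sumZ_scal by auto. apply sumZ_ext. intro j.
    rewrite IHn. unfold tilt. rewrite plus_IZR.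
    replace (- beta * (IZR l + (IZR x + IZR j))) with (- beta * (IZR l + IZR x) + - (beta * IZR j)) by ring.
    rewrite exp_plus, exp_Ropp. field. apply Rgt_not_eq, exp_pos.
Qed.

Lemma ladder_height_tilt (p : Z -> R) (beta : R) (L : nat) :
  ladder_height (tilt beta p) L = exp (- beta * INR L) * ladder_height p L.
Proof.
  destruct L; [simpl; ring|]. unfold ladder_height. rewrite <- sumN_scal.
  f_equal. apply functional_extensionality. intro n. rewrite first_passage_tilt.
  now rewrite INR_IZR_INZ, Rplus_0_r.
Qed.

Lemma ladder_conv_tilt (p : Z -> R) (beta : R) (k l : nat) :
  ladder_conv (tilt beta p) k l = exp (- beta * INR l) * ladder_conv p k l.
Proof.
  revert l. induction k; intro l.
  - simpl. destruct (Nat.eqb_spec l 0); [|ring]. subst. simpl. rewrite Rmult_0_r, exp_0. ring.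
  - cbn [ladder_conv]. rewrite scal_sum. apply sum_eq. intros m Hm.
    rewrite ladder_height_tilt, IHk, minus_INR by lia.
    replace (- beta * INR l) with (- beta * INR m + - beta * (INR l - INR m)) by ring.
    rewrite exp_plus. ring.
Qed.

Lemma renewal_tilt (p : Z -> R) (beta : R) (l : nat) :
  renewal (tilt beta p) l = exp (- beta * INR l) * renewal p l.
Proof.
  unfold renewal. rewrite <- sumN_scal. f_equal. apply functional_extensionality. intro k.
  apply ladder_conv_tilt.
Qed.

Lemma exp_ge1 (x : R) : 0 <= x -> 1 <= exp x.
Proof. intro H. rewrite <- exp_0. destruct H; [left; now apply exp_increasing | subst; lra]. Qed.

(* By
   induction on N: one step of the tilted walk turns the bound at y + j into
   e^{-beta (y+1)} p(j), and p sums to 1. *)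
Lemma tilted_exit_bound (p : Z -> R) (beta : R) :
  (forall j, 0 <= p j) -> is_sumZ p 1 -> 0 < beta -> is_sumZ (tilt beta p) 1 ->
  forall N y, 1 - stay (tilt beta p) N y <= exp (- beta * (IZR y + 1)).
Proof.
  intros P0 P1 Hb Q1. set (q := tilt beta p).
  assert (Q0 : forall j, 0 <= q j) by (intro j; apply Rmult_le_pos; [left; apply exp_pos | auto]).
  assert (Hneg : forall N y, (y < 0)%Z -> 1 - stay q N y <= exp (- beta * (IZR y + 1))).
  { intros N y Hy. rewrite stay_neg by auto. apply Z.lt_le_pred, IZR_le in Hy. simpl in Hy.
    rewrite Rminus_0_r. apply exp_ge1. nra. }
  induction N; intro y; (destruct (Z.leb_spec 0 y); [|now apply Hneg]).
  - rewrite stay_0 by auto. assert (0 < exp (- beta * (IZR y + 1))) by apply exp_pos. lra.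
  - rewrite stay_S by auto.
    assert (HD := is_sumZ_plus _ _ _ _ Q1 (is_sumZ_scal (-1) _ _ (stay_step_sum q Q0 Q1 N y))).
    assert (HE := is_sumZ_scal (exp (- beta * (IZR y + 1))) _ _ P1).
    rewrite Rmult_1_r in HE.
    replace (1 - sumZ (fun j => q j * stay q N (y + j))) with
      (1 + -1 * sumZ (fun j => q j * stay q N (y + j))) by ring.
    refine (is_sumZ_le _ _ _ _ _ HD HE).
    intro j. cbv beta. fold q.
    assert (Htilt : q j * exp (- beta * (IZR (y + j) + 1)) = exp (- beta * (IZR y + 1)) * p j).
    { unfold q, tilt. rewrite plus_IZR.
      replace (- beta * (IZR y + IZR j + 1)) with (- beta * (IZR y + 1) + - (beta * IZR j)) by ring.
      rewrite exp_plus, exp_Ropp. field. apply Rgt_not_eq, exp_pos. }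
    assert (q j * (1 - stay q N (y + j)) <= q j * exp (- beta * (IZR (y + j) + 1)))
      by (apply Rmult_le_compat_l; auto).
    lra.
Qed.

Section Harmonic.

Variables (p : Z -> R) (beta : R).
Hypothesis p_nonneg : forall j, 0 <= p j.
Hypothesis tilt_total : is_sumZ (tilt beta p) 1.

Lemma tilt_nonneg (j : Z) : 0 <= tilt beta p j.
Proof. apply Rmult_le_pos; [left; apply exp_pos | auto]. Qed.

(* Harmonicity: e^{beta i} q(j - i) = p(j - i) e^{beta j} for q the tilted law. *)
Lemma fbeta_harmonic (i : nat) :
  is_series (fun j : nat => p (Z.of_nat j - Z.of_nat i)%Z * fbeta beta p j) (fbeta beta p i).
Proof.
  assert (H := is_series_scal_l (exp (beta * INR i)) _ _
                 (min_prob_harmonic _ tilt_nonneg tilt_total i)).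
  assert (E : forall j : nat,
    exp (beta * INR i) * (tilt beta p (Z.of_nat j - Z.of_nat i)%Z * min_prob (tilt beta p) (Z.of_nat j))
    = p (Z.of_nat j - Z.of_nat i)%Z * fbeta beta p j).
  { intro j. unfold fbeta, tilt. rewrite minus_IZR, <- !INR_IZR_INZ.
    replace (beta * INR j) with (beta * INR i + beta * (INR j - INR i)) by ring.
    rewrite exp_plus. ring. }
  exact (is_series_ext _ _ _ E H).
Qed.

Lemma fbeta_bounds (i : nat) : 0 < beta -> is_sumZ p 1 ->
  exp (beta * INR i) - exp (- beta) <= fbeta beta p i <= exp (beta * INR i).
Proof.
  intros Hbeta P1. unfold fbeta. set (q := tilt beta p).
  destruct (min_prob_01 q tilt_nonneg tilt_total (Z.of_nat i)).
  assert (Hlow : 1 - exp (- beta * (INR i + 1)) <= min_prob q (Z.of_nat i)).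
  { apply (is_lim_seq_le (fun _ => 1 - exp (- beta * (INR i + 1))) (fun N => stay q N (Z.of_nat i))
                         (1 - exp (- beta * (INR i + 1))) (min_prob q (Z.of_nat i)));
      [|apply is_lim_seq_const | apply min_prob_lim; auto using tilt_nonneg].
    intro N. assert (E := tilted_exit_bound p beta p_nonneg P1 Hbeta tilt_total N (Z.of_nat i)).
    rewrite <- INR_IZR_INZ in E. fold q in E. lra. }
  assert (Ep : 0 < exp (beta * INR i)) by apply exp_pos.
  replace (exp (- beta)) with (exp (beta * INR i) * exp (- beta * (INR i + 1)))
    by (rewrite <- exp_plus; f_equal; ring).
  split; nra.
Qed.

Lemma fbeta_renewal (i : nat) :
  fbeta beta p i = tau_inf_prob (tilt beta p) *
    sum_f_R0 (fun j => exp (beta * (INR i - INR j)) * renewal p j) i.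
Proof.
  unfold fbeta, tau_inf_prob. rewrite (min_prob_renewal _ tilt_nonneg tilt_total i).
  rewrite Rmult_comm, Rmult_assoc. f_equal.
  rewrite Rmult_comm, scal_sum. apply sum_eq. intros j _.
  rewrite renewal_tilt.
  replace (beta * (INR i - INR j)) with (beta * INR i + - beta * INR j) by ring.
  rewrite exp_plus. ring.
Qed.

End Harmonic.

Theorem mainTheorem9 (p : Z -> R) (beta : R)
  (Hp : is_pmf p) (Hmean : mean_negative p) (Hbeta : 0 < beta)
  (Hcramer : has_sumZ (tilt beta p) 1) :
  (forall i : nat,
      infinite_sum (fun j : nat => p (Z.of_nat j - Z.of_nat i)%Z * fbeta beta p j)
                   (fbeta beta p i)) /\
  (forall i : nat,
      exp (beta * INR i) - exp (- beta) <= fbeta beta p i <= exp (beta * INR i)) /\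
  (forall i : nat,
      fbeta beta p i =
      tau_inf_prob (tilt beta p) *
      sum_f_R0 (fun j => exp (beta * (INR i - INR j)) * renewal p j) i).
Proof.
  destruct Hp as [P0 P1]. apply has_sumZ_is_sumZ in P1, Hcramer.
  split; [|split]; intro i.
  - apply is_series_Reals, fbeta_harmonic; auto.
  - now apply fbeta_bounds.
  - now apply fbeta_renewal.
Qed.
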